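(* Let $n,m\ge 1$, let $R\in\mathbb{R}^{2n\times 2n}$ be symmetric, $C\in\mathbb{R}^{2m\times 2n}$, $\Sigma\in\mathbb{R}^{2m\times 2m}$ real symplectic, and consider the linear system with $A=\mathbb{J}_{2n}R-\tfrac12 C^{\sharp}C$, $B=-C^{\sharp}\Sigma$, output matrix $C$, $D=\Sigma$ (state $x\in\mathbb{R}^{2n}$). Let $\tilde{\mathcal{O}}=\begin{pmatrix}C\\ C(\mathbb{J}_{2n}R)\\ \vdots\\ C(\mathbb{J}_{2n}R)^{2n-1}\end{pmatrix}\in\mathbb{R}^{4nm\times 2n}$, and let $\tilde{\mathcal{O}}=QEZ^{-1}$ be a factorization with $Q\in\mathbb{R}^{4nm\times 4nm}$ orthogonal, $Z\in\mathbb{R}^{2n\times 2n}$ real symplectic, and $$E=\begin{pmatrix}\Xi_k&0&0&0&0&0\\ 0&I_l&0&0&0&0\\ 0&0&0&\Xi_k&0&0\\ 0&0&0&0&0&0\end{pmatrix}\in\mathbb{R}^{4nm\times 2n},$$ with column blocks of widths $k,l,n-k-l,k,l,n-k-l$, row blocks of heights $k,l,k,4nm-2k-l$, and $\Xi_k=\operatorname{diag}(\xi_1,\dots,\xi_k)$ with all $\xi_i>0$; and let $V=Z^{-1}$ (this $V$ is real symplectic and puts the system in the Kalman-like canonical form described below, with these integers $k,l$). Let $X\in\mathbb{R}^{4nm\times 4nm}$ be invertible and $Y\in\mathbb{R}^{2n\times 2n}$ real symplectic such that $$XEY=\begin{pmatrix}\Xi'_k&0&0&0&0&0\\ 0&\Xi'_l&0&0&0&0\\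 0&0&0&\Xi''_k&0&0\\ 0&0&0&0&0&0\end{pmatrix}$$ (same block sizes as $E$), where $\Xi'_k,\Xi''_k\in\mathbb{R}^{k\times k}$ and $\Xi'_l\in\mathbb{R}^{l\times l}$ are diagonal with all diagonal entries nonzero. Then $V'=Y^{-1}V$ also puts the system in the Kalman-like canonical form, i.e. $V'$ is real symplectic and, writing $\hat x=V'x=(\hat q_a,\hat q_b,\hat q_c,\hat p_a,\hat p_b,\hat p_c)$ with blocks of sizes $k,l,n-k-l,k,l,n-k-l$: the entries of $\hat q_a,\hat p_a$ are controllable and observable; the entries of $\hat p_b$ are controllable but unobservable; the entries of $\hat q_b$ are uncontrollable but observable; the entries of $\hat q_c,\hat p_c$ are uncontrollable and unobservable; and $\hat A=V'AV'^{-1}$, $\hat B=V'B$, $\hat C=CV'^{-1}$ have, with respect to this block partition, the form $$\hat A=\begin{pmatrix} * & * & 0 & * & 0 & 0\\ 0 & * & 0 & 0 & 0 & 0\\ 0 & * & * & 0 & 0 & *\\ * & * & 0 & * & 0 & 0\\ * & * & * & * & * & *\\ 0 & * & * & 0 & 0 & * \end{pmatrix},\quad \hat B=\begin{pmatrix}*\\0\\0\\ *\\ *\\0\end{pmatrix},\quad \hat C=\begin{pmatrix}* & * & 0 & * & 0 & 0\end{pmatrix},$$ where $*$ denotes blocks that are arbitrary real matrices of compatible sizes.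
   Context: $\mathbb{J}_{2k}=\begin{pmatrix}0_{k\times k}& I_k\\ -I_k & 0_{k\times k}\end{pmatrix}$. For a real $2r\times 2s$ matrix $X$, $X^{\sharp}=-\mathbb{J}_{2s}X^{\top}\mathbb{J}_{2r}$. A real $2k\times 2k$ matrix $T$ is symplectic if $TT^{\sharp}=T^{\sharp}T=I_{2k}$, equivalently $T^{\top}\mathbb{J}_{2k}T=\mathbb{J}_{2k}$. (A factorization $\tilde{\mathcal{O}}=QEZ^{-1}$ of the stated type always exists.) For a linear system with matrices $(A,B,C)$ and $2n$-dimensional state, the controllability matrix is $\mathcal{C}=(B\;AB\;\cdots\;A^{2n-1}B)$ and the observability matrix is $\mathcal{O}=(C^{\top}\;(CA)^{\top}\;\cdots\;(CA^{2n-1})^{\top})^{\top}$; the controllable subspace is $\operatorname{Im}\mathcal{C}$, the unobservable subspace is $\operatorname{Ker}\mathcal{O}$, the uncontrollable subspace is the orthogonal complement of $\operatorname{Im}\mathcal{C}$ in $\mathbb{R}^{2n}$, and the observable subspace is the orthogonal complement of $\operatorname{Ker}\mathcal{O}$. For the transformed system $(\hat A,\hat B,\hat C)$, the $i$-th transformed coordinate is called controllable (resp. uncontrollable, observable, unobservable) if the standard basis vector $e_i$ lies in the corresponding subspace of the transformed system. *)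

From HB Require Import structures.
From mathcomp Require Import all_boot all_order all_algebra.
From mathcomp Require Import reals.
Set Implicit Arguments. Unset Strict Implicit. Unset Printing Implicit Defensive.
Import Order.TTheory GRing.Theory Num.Theory.
Local Open Scope ring_scope.

Section Defs.
Variable R : realType.

Definition Jmx (k : nat) : 'M[R]_(k + k) :=
  block_mx 0 1%:M (- 1%:M) 0.

Definition sharp (r s : nat) (X : 'M[R]_(r + r, s + s)) : 'M[R]_(s + s, r + r) :=
  - (Jmx s *m X^T *m Jmx r).

Definition symplectic (k : nat) (T : 'M[R]_(k + k)) : Prop :=
  T *m sharp T = 1%:M /\ sharp T *m T = 1%:M.

Definition orthogonal_mx (N : nat) (Q : 'M[R]_N) : Prop := Q^T *m Q = 1%:M.

Definition ctrbmx (N p : nat) (A : 'M[R]_N) (B : 'M[R]_(N, p)) :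
  'M[R]_(N, \sum_(i < N) p) := \mxrow_(i < N) (A ^+ i *m B).

Definition obsvmx (N q : nat) (A : 'M[R]_N) (C : 'M[R]_(q, N)) :
  'M[R]_(\sum_(i < N) q, N) := \mxcol_(i < N) (C *m A ^+ i).

Definition in_controllable (N p : nat) (A : 'M[R]_N) (B : 'M[R]_(N, p))
  (v : 'cV[R]_N) : Prop := exists w : 'cV[R]_(\sum_(i < N) p), v = ctrbmx A B *m w.
Definition in_uncontrollable (N p : nat) (A : 'M[R]_N) (B : 'M[R]_(N, p))
  (v : 'cV[R]_N) : Prop := forall w : 'cV[R]_(\sum_(i < N) p), v^T *m (ctrbmx A B *m w) = 0.
Definition in_unobservable (N q : nat) (A : 'M[R]_N) (C : 'M[R]_(q, N))
  (v : 'cV[R]_N) : Prop := obsvmx A C *m v = 0.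
Definition in_observable (N q : nat) (A : 'M[R]_N) (C : 'M[R]_(q, N))
  (v : 'cV[R]_N) : Prop := forall w : 'cV[R]_N, obsvmx A C *m w = 0 -> v^T *m w = 0.

Definition evec (N : nat) (i : 'I_N) : 'cV[R]_N := delta_mx i 0.

(* block-structured matrix
   [[D1,0,0,0,0,0],[0,D2,0,0,0,0],[0,0,0,D3,0,0],[0,0,0,0,0,0]]
   column blocks k,l,n-k-l,k,l,n-k-l ; row blocks k,l,k,M-2k-l ;
   D1 = diag(d1 0..d1 (k-1)), D2 = diag(d2 0..), D3 = diag(d3 0..). *)
Definition kalmanE (n M k l : nat) (d1 d2 d3 : nat -> R) : 'M[R]_(M, n + n) :=
  \matrix_(i < M, j < n + n)
    if (i < k)%N then (if (j == i :> nat) then d1 i else 0)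
    else if (i < k + l)%N then (if (j == i :> nat) then d2 (i - k)%N else 0)
    else if (i < k + l + k)%N then
      (if (j == n + (i - (k + l)) :> nat)%N then d3 (i - (k + l))%N else 0)
    else 0.

End Defs.

Arguments Jmx {R} k.
Arguments kalmanE {R} n M k l d1 d2 d3.
Arguments evec {R N} i.

Inductive part := Qa | Qb | Qc | Pa | Pb | Pc.

Definition blk (n k l i : nat) : part :=
  if (i < n)%N then
    (if (i < k)%N then Qa else if (i < k + l)%N then Qb else Qc)
  else
    (if (i - n < k)%N then Pa else if (i - n < k + l)%N then Pb else Pc).

Definition zeroA (r c : part) : bool :=
  match r, c with
  | Qa, (Qc | Pb | Pc) => true
  | Pa, (Qc | Pb | Pc) => true
  | Qb, Qb => false
  | Qb, _ => true
  | Qc, (Qa | Pa | Pb) => true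
  | Pc, (Qa | Pa | Pb) => true
  | _, _ => false
  end.

Definition zeroB (r : part) : bool :=
  match r with Qb | Qc | Pc => true | _ => false end.

Definition zeroC (c : part) : bool :=
  match c with Qc | Pb | Pc => true | _ => false end.

(* After the symplectic change of coordinates W = Z Y the system keeps its shape:
   A^ = J R^ - C^#C^/2 and B^ = -C^# Sigma with R^ = W^T R W symmetric and C^ = C W,
   and its observability matrix with respect to J R^ becomes (Q X^-1) E', where E' is
   the matrix built from d1, d2, d3.  Hence the unobservable subspace of (J R^, C^) is
   exactly the span of the coordinates q_c, p_b, p_c.  By Cayley-Hamilton it is
   J R^-invariant, C^ vanishes on it, and the output injection A^ = J R^ - (C^#/2) C^
   does not change it: this gives the observability claims and the zero blocks of C^
   and of A^ below the observable rows.  Since J R^ is Hamiltonian, J exchanges q_i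
   and p_i and carries the row space of the observability matrix into the span of
   the (J R^)^t C^#; as C^# = -B^ Sigma^-1 and J R^ = A^ + B^ K is a state feedback,
   that span is the controllable subspace of (A^, B^), which gives the controllable
   coordinates q_a, p_a, p_b.  The same symmetry turns the invariance of the
   unobservable subspace into the remaining zero blocks of A^, and makes the rows
   of C^# = -J C^T J, hence of B^, vanish on the uncontrollable coordinates. *)

From HB Require Import structures.
From mathcomp Require Import all_boot all_order all_algebra.
From mathcomp Require Import reals.
From mathcomp Require Import zify.
Import Order.TTheory GRing.Theory Num.Theory.
Local Open Scope ring_scope.

Set Implicit Arguments. Unset Strict Implicit. Unset Printing Implicit Defensive.

Definition swap_qp n (i : 'I_(n + n)) : 'I_(n + n) :=
  match split i with inl a => rshift n a | inr b => lshift n b end.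

Lemma val_swap_qp n (i : 'I_(n + n)) :
  val (swap_qp i) = if (i < n)%N then (i + n)%N else (i - n)%N.
Proof.
rewrite /swap_qp; case: splitP => [a ->|b ->] /=; first by rewrite addnC.
by rewrite addKn.
Qed.

Lemma swap_qp_lt n (i : 'I_(n + n)) : (swap_qp i < n)%N = ~~ (i < n)%N.
Proof.
rewrite val_swap_qp; have := ltn_ord i; case: ifP => hi lt_i.
  by rewrite ltnNge leq_addl.
by rewrite ltn_subLR ?lt_i // leqNgt hi.
Qed.

Lemma swap_qpK n : involutive (@swap_qp n).
Proof.
move=> i; apply: val_inj; rewrite val_swap_qp swap_qp_lt val_swap_qp.
by have := ltn_ord i; case: (ltnP i n) => /=; lia.
Qed.

Lemma eq_swap_qp n (i j : 'I_(n + n)) : (i == swap_qp j) = (swap_qp i == j).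
Proof. by apply/eqP/eqP => [->|<-]; rewrite swap_qpK. Qed.

Section Symplectic.
Variable R : realType.

Lemma JmxE n (i j : 'I_(n + n)) :
  Jmx n i j = if (i < n)%N then (j == swap_qp i)%:R else - (j == swap_qp i)%:R :> R.
Proof.
have split_l (a : 'I_n) : split (lshift n a) = inl a by exact: (unsplitK (inl a)).
have split_r (a : 'I_n) : split (rshift n a) = inr a by exact: (unsplitK (inr a)).
rewrite /Jmx /swap_qp -[i]splitK -[j]splitK.
case: (split i) => a; case: (split j) => b /=;
  rewrite ?block_mxEul ?block_mxEur ?block_mxEdl ?block_mxEdr ?split_l ?split_r !mxE /=.
- rewrite ltn_ord; case: eqP => // /(congr1 val) /=; have := ltn_ord b; lia.
- by rewrite ltn_ord eq_rshift eq_sym.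
- by rewrite ltnNge leq_addr /= eq_lshift eq_sym.
- rewrite ltnNge leq_addr /=; case: eqP; rewrite ?oppr0 // => /(congr1 val) /=.
  have := ltn_ord a; lia.
Qed.

Lemma mulJmx n p (M : 'M[R]_(n + n, p)) i j :
  (Jmx n *m M) i j = if (i < n)%N then M (swap_qp i) j else - M (swap_qp i) j.
Proof.
rewrite mxE (bigD1 (swap_qp i)) //= big1 => [|k hk].
  by rewrite addr0 JmxE eqxx; case: ifP; rewrite ?mul1r ?mulN1r.
by rewrite JmxE (negbTE hk); case: ifP; rewrite ?oppr0 mul0r.
Qed.

Lemma mulmxJ n p (M : 'M[R]_(p, n + n)) i j :
  (M *m Jmx n) i j = if (j < n)%N then - M i (swap_qp j) else M i (swap_qp j).
Proof.
rewrite mxE (bigD1 (swap_qp j)) //= big1 => [|k hk].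
  by rewrite addr0 JmxE swap_qp_lt swap_qpK eqxx; case: (j < n)%N; rewrite /= ?mulr1 ?mulrN1.
by rewrite JmxE eq_swap_qp eq_sym (negbTE hk); case: ifP; rewrite ?oppr0 mulr0.
Qed.

Lemma mulJmxJmx n : Jmx n *m Jmx n = - 1%:M :> 'M[R]_(n + n).
Proof.
apply/matrixP => i j; rewrite mulJmx JmxE swap_qp_lt swap_qpK !mxE eq_sym.
by case: (i < n)%N.
Qed.

Lemma trmx_Jmx n : (Jmx n)^T = - Jmx n :> 'M[R]_(n + n).
Proof.
apply/matrixP => i j.
rewrite [LHS]mxE [RHS]mxE !JmxE eq_swap_qp.
have [<-|_] := eqVneq (swap_qp i) j; last by case: ifP; case: ifP; rewrite ?oppr0.
by rewrite swap_qp_lt; case: (i < n)%N; rewrite /= ?opprK.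
Qed.

Lemma Jmx_delta_swap n (i : 'I_(n + n)) :
  Jmx n *m delta_mx (swap_qp i) 0
  = (if (i < n)%N then 1 else -1) *: delta_mx i 0 :> 'cV[R]_(n + n).
Proof.
apply/matrixP => r c; rewrite ord1 mulJmx !mxE (inj_eq (can_inj (@swap_qpK n))) andbT.
have [->|neq] := eqVneq r i; first by case: ifP; rewrite /= ?mulr1 ?mulrN1.
by rewrite /= mulr0; case: ifP; rewrite ?oppr0.
Qed.

Lemma sharpK r s (X : 'M[R]_(r + r, s + s)) : sharp (sharp X) = X.
Proof.
rewrite /sharp linearN /= !trmx_mul !trmx_Jmx trmxK.
rewrite ?(mulmxN, mulNmx, opprK) !mulmxA mulJmxJmx mulNmx mul1mx -!mulmxA mulJmxJmx.
by rewrite mulmxN mulmx1 opprK.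
Qed.

Lemma sharp_mul r s t (X : 'M[R]_(r + r, s + s)) (Y : 'M[R]_(s + s, t + t)) :
  sharp (X *m Y) = sharp Y *m sharp X.
Proof.
rewrite /sharp trmx_mul mulmxN mulNmx opprK !mulmxA.
by rewrite -[Jmx t *m Y^T *m Jmx s *m Jmx s]mulmxA mulJmxJmx mulmxN mulmx1 !mulNmx.
Qed.

Lemma trmx_sharp r s (X : 'M[R]_(r + r, s + s)) : X^T = - (Jmx s *m sharp X *m Jmx r).
Proof.
rewrite /sharp mulmxN mulNmx opprK !mulmxA mulJmxJmx !mulNmx mul1mx -mulmxA.
by rewrite mulJmxJmx mulmxN mulmx1 opprK.
Qed.

Lemma symplectic_unit k (T : 'M[R]_(k + k)) : symplectic T -> T \in unitmx.
Proof. by case=> /mulmx1_unit[]. Qed.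

Lemma symplectic_inv k (T : 'M[R]_(k + k)) : symplectic T -> invmx T = sharp T.
Proof.
move=> hT; have uT := symplectic_unit hT; case: hT => hTT _.
by rewrite -[sharp T](mulKmx uT) hTT mulmx1.
Qed.

Lemma symplectic_mul k (T1 T2 : 'M[R]_(k + k)) :
  symplectic T1 -> symplectic T2 -> symplectic (T1 *m T2).
Proof.
move=> [a1 b1] [a2 b2]; rewrite /symplectic sharp_mul; split.
  by rewrite mulmxA -[T1 *m T2 *m _]mulmxA a2 mulmx1 a1.
by rewrite mulmxA -[sharp T2 *m sharp T1 *m _]mulmxA b1 mulmx1 b2.
Qed.

Lemma symplectic_invmx k (T : 'M[R]_(k + k)) : symplectic T -> symplectic (invmx T).
Proof. by move=> hT; rewrite symplectic_inv // /symplectic sharpK; case: hT. Qed.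

Lemma symplectic_invmx_Jmx k (T : 'M[R]_(k + k)) :
  symplectic T -> invmx T *m Jmx k = Jmx k *m T^T.
Proof.
move=> hT; rewrite symplectic_inv // /sharp !mulNmx -!mulmxA mulJmxJmx.
by rewrite !mulmxN mulmx1 opprK.
Qed.

Lemma symplectic_invmx_sharp k r (T : 'M[R]_(k + k)) (X : 'M[R]_(r + r, k + k)) :
  symplectic T -> invmx T *m sharp X = sharp (X *m T).
Proof. by move=> hT; rewrite sharp_mul symplectic_inv. Qed.

Lemma hamiltonian_Jmx_sym n (S : 'M[R]_(n + n)) :
  S^T = S -> (Jmx n *m S)^T *m Jmx n = - (Jmx n *m (Jmx n *m S)).
Proof.
move=> hS; rewrite trmx_mul hS trmx_Jmx mulmxN mulNmx -mulmxA mulJmxJmx mulmxN mulmx1.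
by rewrite opprK mulmxA mulJmxJmx mulNmx mul1mx opprK.
Qed.

Lemma symplectic_conj_Jmx_mul n (W S : 'M[R]_(n + n)) : symplectic W ->
  invmx W *m (Jmx n *m S) *m W = Jmx n *m (W^T *m S *m W).
Proof. by move=> hW; rewrite !mulmxA symplectic_invmx_Jmx. Qed.

Lemma symplectic_conj_hamiltonian n m (W S : 'M[R]_(n + n))
    (C : 'M[R]_(m + m, n + n)) : symplectic W ->
  invmx W *m (Jmx n *m S - 2^-1 *: (sharp C *m C)) *m W
  = Jmx n *m (W^T *m S *m W) - 2^-1 *: (sharp (C *m W) *m (C *m W)).
Proof.
move=> hW; rewrite mulmxBr mulmxBl symplectic_conj_Jmx_mul // -scalemxAr -scalemxAl.
by congr (_ - _ *: _); rewrite -symplectic_invmx_sharp // !mulmxA.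
Qed.

End Symplectic.

Section CoordinateSupport.
Variables (R : pzRingType) (N : nat) (P : pred 'I_N).

Definition supported (v : 'cV[R]_N) := forall j, ~~ P j -> v j 0 = 0.

Definition preserves_support (A : 'M[R]_N) := forall r c, ~~ P r -> P c -> A r c = 0.

Lemma supported_mul A v : preserves_support A -> supported v -> supported (A *m v).
Proof.
move=> hA hv j hj; rewrite mxE big1 // => c _.
by have [hc|hc] := boolP (P c); [rewrite hA // mul0r | rewrite hv // mulr0].
Qed.

Lemma supported_exp_mul A v t :
  preserves_support A -> supported v -> supported (A ^+ t *m v).
Proof.
move=> hA hv; elim: t => [|t IH]; first by rewrite expr0 mul1mx.
by rewrite exprS -mulmxE -mulmxA; apply: supported_mul.
Qed.

Lemma supported_mul_rows p (A : 'M[R]_(N, p)) w :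
  (forall r c, ~~ P r -> A r c = 0) -> supported (A *m w).
Proof. by move=> hA j hj; rewrite mxE big1 // => c _; rewrite hA // mul0r. Qed.

Lemma mul_supported_eq0 q (A : 'M[R]_(q, N)) v :
  (forall r c, P c -> A r c = 0) -> supported v -> A *m v = 0.
Proof.
move=> hA hv; apply/matrixP => r c; rewrite ord1 !mxE big1 // => j _.
by have [hj|hj] := boolP (P j); [rewrite hA // mul0r | rewrite hv ?mulr0].
Qed.

Lemma supported_sum (I : finType) (F : I -> 'cV[R]_N) :
  (forall i, supported (F i)) -> supported (\sum_i F i).
Proof. by move=> hF j hj; rewrite summxE big1 // => i _; apply: hF. Qed.

Lemma supported_delta j : P j -> supported (delta_mx j 0).
Proof. by move=> Pj i; rewrite mxE; have [->|] := eqVneq i j; rewrite ?Pj. Qed.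

End CoordinateSupport.

Arguments supported_delta {R N P j}.

Section MatrixFacts.
Variable R : comNzRingType.

Lemma trmx_delta_mul N (i : 'I_N) (x : 'cV[R]_N) : (delta_mx i 0)^T *m x = (x i 0)%:M.
Proof.
apply/matrixP => a b; rewrite !ord1 trmx_delta mxE (bigD1 i) //= big1 => [|j /negbTE ji].
  by rewrite !mxE !eqxx mul1r addr0.
by rewrite mxE ji mul0r.
Qed.

Lemma trmx_conj_sym N (W S : 'M[R]_N) : S^T = S -> (W^T *m S *m W)^T = W^T *m S *m W.
Proof. by move=> S_sym; rewrite !trmx_mul trmxK S_sym mulmxA. Qed.

Lemma mulmx_row0 p q r (A : 'M[R]_(p, q)) (B : 'M[R]_(q, r)) i j :
  (forall x, A i x = 0) -> (A *m B) i j = 0.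
Proof. by move=> h; rewrite mxE big1 // => x _; rewrite h mul0r. Qed.

Lemma mulmx_col0 p q r (A : 'M[R]_(p, q)) (B : 'M[R]_(q, r)) i j :
  (forall x, B x j = 0) -> (A *m B) i j = 0.
Proof. by move=> h; rewrite mxE big1 // => x _; rewrite h mulr0. Qed.

Lemma cayley_hamilton_mul_exp q N (A : 'M[R]_N) (C : 'M[R]_(q, N)) (v : 'cV[R]_N) :
  (forall i, (i < N)%N -> C *m A ^+ i *m v = 0) -> C *m A ^+ N *m v = 0.
Proof.
case: N A C v => [|N] A C v h; first by rewrite [C]thinmx0 !mul0mx.
have CH := Cayley_Hamilton A.
rewrite -[char_poly A]coefK poly_def rmorph_sum /= size_char_poly big_ord_recr /= in CH.
have lc : (char_poly A)`_N.+1 = 1.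
  by have := char_poly_monic A; rewrite monicE /lead_coef size_char_poly => /eqP.
move: CH; rewrite horner_mxZ rmorphXn /= horner_mx_X lc scale1r.
move=> /(congr1 (fun X => C *m X *m v)).
rewrite mulmx0 mul0mx mulmxDr mulmxDl mulmx_sumr mulmx_suml big1 ?add0r // => i _.
by rewrite horner_mxZ rmorphXn /= horner_mx_X -scalemxAr -scalemxAl h // scaler0.
Qed.

Lemma trmx_exp_hamiltonian N (A J : 'M[R]_N) : A^T *m J = - (J *m A) ->
  forall t, (A ^+ t)^T *m J = (-1) ^+ t *: (J *m A ^+ t).
Proof.
move=> hA; elim => [|t IH]; first by rewrite !expr0 trmx1 mul1mx mulmx1 scale1r.
rewrite exprSr -mulmxE trmx_mul -mulmxA IH -scalemxAr [A^T *m _]mulmxA hA mulNmx.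
by rewrite -mulmxA mulmxE -exprS -exprSr [(-1) ^+ _.+1]exprS mulN1r scaleNr scalerN.
Qed.

End MatrixFacts.

Lemma conjmx_exp (R : comUnitRingType) N (W A : 'M[R]_N) : W \in unitmx ->
  forall t, (invmx W *m A *m W) ^+ t = invmx W *m A ^+ t *m W.
Proof.
move=> uW; elim => [|t IH]; first by rewrite !expr0 mulmx1 mulVmx.
rewrite exprS IH -mulmxE !mulmxA mulmxK // -[invmx W *m A *m A ^+ t]mulmxA.
by rewrite mulmxE -exprS.
Qed.

Section LinearSystems.
Variable R : realType.

Lemma obsvmx_mul_eq0 N q (A : 'M[R]_N) (C : 'M[R]_(q, N)) (v : 'cV[R]_N) :
  obsvmx A C *m v = 0 <-> forall i : 'I_N, C *m A ^+ i *m v = 0.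
Proof.
rewrite /obsvmx mxcol_mul; split => [h i|h].
  by rewrite -(@mxcolK _ _ (fun _ => q) _ (fun i => C *m A ^+ i *m v) i) h submxcol0.
by rewrite (eq_mxcol h) mxcol0.
Qed.

Lemma obsvmx_ker_mul N q (A : 'M[R]_N) (C : 'M[R]_(q, N)) (v : 'cV[R]_N) :
  obsvmx A C *m v = 0 -> obsvmx A C *m (A *m v) = 0.
Proof.
move/obsvmx_mul_eq0 => hv; apply/obsvmx_mul_eq0 => i.
rewrite mulmxA -[C *m A ^+ i *m A]mulmxA mulmxE -exprSr.
have [lt_iN|le_Ni] := ltnP i.+1 N; first exact: (hv (Ordinal lt_iN)).
have -> : i.+1 = N by have := ltn_ord i; lia.
by apply: cayley_hamilton_mul_exp => t lt_tN; apply: (hv (Ordinal lt_tN)).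
Qed.

Lemma obsvmx_output_injection N q (A : 'M[R]_N) (L : 'M[R]_(N, q)) (C : 'M[R]_(q, N))
    (v : 'cV[R]_N) :
  obsvmx A C *m v = 0 -> obsvmx (A + L *m C) C *m v = 0.
Proof.
move/obsvmx_mul_eq0 => hv; apply/obsvmx_mul_eq0 => i.
rewrite -mulmxA; suff -> : (A + L *m C) ^+ i *m v = A ^+ i *m v by rewrite mulmxA hv.
elim: (val i) (ltnW (ltn_ord i)) => [|t IH] lt_tN; first by rewrite !expr0.
rewrite !exprS -!mulmxE -!mulmxA IH 1?ltnW // mulmxDl -mulmxA.
by rewrite [C *m _]mulmxA (hv (Ordinal lt_tN)) mulmx0 addr0.
Qed.

Lemma obsvmx_conj N q (W A : 'M[R]_N) (C : 'M[R]_(q, N)) : W \in unitmx ->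
  obsvmx (invmx W *m A *m W) (C *m W) = obsvmx A C *m W.
Proof.
move=> uW; rewrite /obsvmx mxcol_mul; apply: eq_mxcol => i.
by rewrite conjmx_exp // !mulmxA mulmxK.
Qed.

Lemma ctrbmx_mul N p (A : 'M[R]_N) (B : 'M[R]_(N, p)) (w : 'cV[R]_(\sum_(i < N) p)) :
  ctrbmx A B *m w = \sum_(i < N) A ^+ i *m B *m submxcol w i.
Proof. by rewrite -{1}[w]submxcolK /ctrbmx mul_mxrow_mxcol. Qed.

Lemma in_controllable_scale N p (A : 'M[R]_N) (B : 'M[R]_(N, p)) c v :
  in_controllable A B v -> in_controllable A B (c *: v).
Proof. by move=> [w ->]; exists (c *: w); rewrite scalemxAr. Qed.

Lemma in_controllable_sum N p (A : 'M[R]_N) (B : 'M[R]_(N, p))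
    (I : finType) (P : pred I) (F : I -> 'cV[R]_N) :
  (forall i, P i -> in_controllable A B (F i)) ->
  in_controllable A B (\sum_(i | P i) F i).
Proof.
move=> hF; apply: (big_ind (in_controllable A B)) => //.
  by exists 0; rewrite mulmx0.
by move=> _ _ [w1 ->] [w2 ->]; exists (w1 + w2); rewrite mulmxDr.
Qed.

Lemma in_controllable_exp_mul N p (A : 'M[R]_N) (B : 'M[R]_(N, p)) t z :
  (t < N)%N -> in_controllable A B (A ^+ t *m B *m z).
Proof.
move=> lt_tN; pose t' := Ordinal lt_tN.
exists (\mxcol_(i < N) (if i == t' then z else 0)).
rewrite ctrbmx_mul (bigD1 t') //= big1 ?addr0 => [|i ne_it].
  by rewrite (@mxcolK _ _ (fun _ => p)) eqxx.
by rewrite (@mxcolK _ _ (fun _ => p)) (negbTE ne_it) mulmx0.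
Qed.

Lemma feedback_exp_mul N p (A : 'M[R]_N) (B : 'M[R]_(N, p)) (K : 'M[R]_(p, N)) t y :
  exists z : 'I_t.+1 -> 'cV[R]_p,
    (A + B *m K) ^+ t *m B *m y = \sum_(i < t.+1) A ^+ i *m B *m z i.
Proof.
elim: t y => [|t IH] y; first by exists (fun _ => y); rewrite big_ord1 !expr0.
have [z hz] := IH y; set x := \sum_(i < t.+1) _ in hz.
exists (fun i => if unlift ord0 i is Some j then z j else K *m x).
rewrite big_ord_recl /= unlift_none expr0 mul1mx.
under eq_bigr do rewrite liftK.
rewrite exprS -mulmxE -!mulmxA [(A + B *m K) ^+ t *m _]mulmxA hz mulmxDl mulmxA addrC.
congr (_ + _); rewrite /x mulmx_sumr; apply: eq_bigr => i _.
by rewrite /bump /= add1n exprS -mulmxE !mulmxA.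
Qed.

Lemma in_controllable_feedback N p (A F : 'M[R]_N) (B : 'M[R]_(N, p)) (K : 'M[R]_(p, N))
    t y :
  F = A + B *m K -> (t < N)%N -> in_controllable A B (F ^+ t *m B *m y).
Proof.
move=> -> lt_tN; have [z ->] := feedback_exp_mul A B K t y.
apply: in_controllable_sum => i _; apply: in_controllable_exp_mul.
by have := ltn_ord i; lia.
Qed.

End LinearSystems.

Definition observable_part (x : part) : bool :=
  match x with Qa | Qb | Pa => true | _ => false end.

Definition controllable_part (x : part) : bool :=
  match x with Qa | Pa | Pb => true | _ => false end.

Lemma controllable_part_swap n k l (i : 'I_(n + n)) :
  controllable_part (blk n k l (swap_qp i)) = observable_part (blk n k l i).
Proof.
rewrite /blk swap_qp_lt val_swap_qp; case: (i < n)%N => /=.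
  by rewrite addnK; case: ifP => //; case: ifP.
by case: ifP => //; case: ifP.
Qed.

Lemma observable_part_swap n k l (i : 'I_(n + n)) :
  observable_part (blk n k l (swap_qp i)) = controllable_part (blk n k l i).
Proof. by rewrite -controllable_part_swap swap_qpK. Qed.

Lemma zeroA_obs_ctrl r c : zeroA r c ->
  (observable_part r && ~~ observable_part c)
  || (~~ controllable_part r && controllable_part c).
Proof. by case: r; case: c. Qed.

Lemma zeroB_unctrl r : zeroB r -> ~~ controllable_part r.
Proof. by case: r. Qed.

Lemma zeroC_unobs c : zeroC c -> ~~ observable_part c.
Proof. by case: c. Qed.

Lemma row_delta_mul (F : fieldType) p q (A : 'M[F]_(p, q)) (r : 'I_p) (j : 'I_q) d :
  d != 0 -> (forall c, A r c = (c == j)%:R * d) ->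
  exists u : 'rV[F]_p, u *m A = delta_mx 0 j.
Proof.
move=> d_neq0 Ar; exists (d^-1 *: delta_mx 0 r); rewrite -scalemxAl -rowE.
apply/rowP => c; rewrite !mxE Ar eqxx /=.
by rewrite mulrCA mulVf // mulr1.
Qed.

Section KalmanE.
Variables (R : realType) (n M k l : nat) (d1 d2 d3 : nat -> R).
Local Notation E := (kalmanE n M k l d1 d2 d3).

Hypothesis hkl : (k + l <= n)%N.

Lemma kalmanE_unobs_col (j : 'I_(n + n)) r :
  ~~ observable_part (blk n k l j) -> E r j = 0.
Proof.
rewrite /kalmanE mxE /blk => unobs_j; have := ltn_ord j; have := ltn_ord r; move: unobs_j.
by repeat (case: ifP => ? //=); move=> *; lia.
Qed.

Hypothesis hM : (k + l + k <= M)%N.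
Hypothesis hd1 : forall i, (i < k)%N -> d1 i != 0.
Hypothesis hd2 : forall i, (i < l)%N -> d2 i != 0.
Hypothesis hd3 : forall i, (i < k)%N -> d3 i != 0.

Lemma kalmanE_obs_row (j : 'I_(n + n)) : observable_part (blk n k l j) ->
  exists u : 'rV[R]_M, u *m E = delta_mx 0 j.
Proof.
have eq_ord (c : 'I_(n + n)) : (c == j :> nat) = (c == j) by [].
have lt_jN := ltn_ord j.
rewrite /blk; case: ifP => [lt_jn|ge_jn];
  [case: ifP => lt_jk; [|case: ifP => lt_jkl] | case: ifP => lt_jk; [|case: ifP]] => //= _.
- have lt_jM : (j < M)%N by lia.
  apply: (row_delta_mul (r := Ordinal lt_jM) (d := d1 j)); first exact: hd1.
  by move=> c; rewrite mxE /= lt_jk eq_ord; case: eqP; rewrite ?mul1r ?mul0r.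
- have lt_jM : (j < M)%N by lia.
  apply: (row_delta_mul (r := Ordinal lt_jM) (d := d2 (j - k))); first by apply: hd2; lia.
  by move=> c; rewrite mxE /= lt_jk lt_jkl eq_ord; case: eqP; rewrite ?mul1r ?mul0r.
- have lt_rM : (k + l + (j - n) < M)%N by lia.
  apply: (row_delta_mul (r := Ordinal lt_rM) (d := d3 (j - n))); first by apply: hd3; lia.
  move=> c; rewrite mxE /= ifF; last by lia.
  rewrite ifF; last by lia.
  rewrite ifT; last by lia.
  have -> : (k + l + (j - n) - (k + l) = j - n)%N by lia.
  have -> : (n + (j - n) = j)%N by lia.
  by rewrite eq_ord; case: eqP; rewrite ?mul1r ?mul0r.
Qed.

End KalmanE.

Definition unobservable_coord n k l : pred 'I_(n + n) :=
  fun j => ~~ observable_part (blk n k l j).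

Definition controllable_coord n k l : pred 'I_(n + n) :=
  fun j => controllable_part (blk n k l j).

Definition kalman_canonical_form (R : realType) n m k l (Ah : 'M[R]_(n + n))
    (Bh : 'M[R]_(n + n, m + m)) (Ch : 'M[R]_(m + m, n + n)) : Prop :=
  [/\ (forall i : 'I_(n + n),
         match blk n k l i with
         | Qa | Pa => in_controllable Ah Bh (evec i) /\ in_observable Ah Ch (evec i)
         | Pb => in_controllable Ah Bh (evec i) /\ in_unobservable Ah Ch (evec i)
         | Qb => in_uncontrollable Ah Bh (evec i) /\ in_observable Ah Ch (evec i)
         | Qc | Pc => in_uncontrollable Ah Bh (evec i) /\ in_unobservable Ah Ch (evec i)
         end),
      (forall i j : 'I_(n + n), zeroA (blk n k l i) (blk n k l j) -> Ah i j = 0),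
      (forall (i : 'I_(n + n)) (j : 'I_(m + m)), zeroB (blk n k l i) -> Bh i j = 0) &
      (forall (i : 'I_(m + m)) (j : 'I_(n + n)), zeroC (blk n k l j) -> Ch i j = 0)].

Section HamiltonianKalmanForm.
Variables (R : realType) (n m k l : nat) (d1 d2 d3 : nat -> R).
Local Notation N := (n + n)%N.
Local Notation M := (\sum_(i < n + n) (m + m))%N.
Hypothesis hkl : (k + l <= n)%N.
Hypothesis hM : (k + l + k <= M)%N.
Hypothesis hd1 : forall i, (i < k)%N -> d1 i != 0.
Hypothesis hd2 : forall i, (i < l)%N -> d2 i != 0.
Hypothesis hd3 : forall i, (i < k)%N -> d3 i != 0.
Variables (Rh : 'M[R]_N) (Ch : 'M[R]_(m + m, N)) (S : 'M[R]_(m + m)) (G : 'M[R]_M).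
Hypothesis Rh_sym : Rh^T = Rh.
Hypothesis S_unit : S \in unitmx.
Hypothesis G_unit : G \in unitmx.
Local Notation JR := (Jmx n *m Rh).
Hypothesis obsvJR : obsvmx JR Ch = G *m kalmanE n M k l d1 d2 d3.

Local Notation obs i := (observable_part (blk n k l i)).
Local Notation ctrl i := (controllable_part (blk n k l i)).
Local Notation unobs := (@unobservable_coord n k l).
Local Notation Ah := (JR - 2^-1 *: (sharp Ch *m Ch)).
Local Notation Bh := (- (sharp Ch *m S)).

Lemma obsvJR_kerE (v : 'cV[R]_N) : obsvmx JR Ch *m v = 0 <-> supported unobs v.
Proof.
split => [v_ker j|v_unobs].
  rewrite /unobservable_coord negbK => obs_j.
  have [u uE] := kalmanE_obs_row hkl hM hd1 hd2 hd3 obs_j.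
  have Ev0 : kalmanE n M k l d1 d2 d3 *m v = 0.
    by rewrite -(mulKmx G_unit (_ *m v)) [G *m _]mulmxA -obsvJR v_ker mulmx0.
  have -> : v j 0 = row j v 0 0 by rewrite mxE.
  by rewrite rowE -uE -mulmxA Ev0 mulmx0 mxE.
rewrite obsvJR -mulmxA (mul_supported_eq0 _ v_unobs) ?mulmx0 // => r c.
exact: kalmanE_unobs_col.
Qed.

Lemma JR_supported_unobs v : supported unobs v -> supported unobs (JR *m v).
Proof. by move=> /obsvJR_kerE/obsvmx_ker_mul/obsvJR_kerE. Qed.

Lemma JR_obs_unobs (i j : 'I_N) : obs i -> ~~ obs j -> JR i j = 0.
Proof.
move=> obs_i unobs_j; have -> : JR i j = col j JR i 0 by rewrite [RHS]mxE.
rewrite colE.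
apply: (JR_supported_unobs (supported_delta (P := unobs) unobs_j)).
by rewrite /unobservable_coord negbK.
Qed.

Lemma JR_unctrl_ctrl (i j : 'I_N) : ~~ ctrl i -> ctrl j -> JR i j = 0.
Proof.
move=> unctrl_i ctrl_j.
have : JR (swap_qp j) (swap_qp i) = 0 by apply: JR_obs_unobs; rewrite observable_part_swap.
have Rh_swap : Rh (swap_qp i) j = Rh j (swap_qp i) by rewrite -[in LHS]Rh_sym mxE.
rewrite !mulJmx swap_qpK Rh_swap => JR_swap.
have -> : Rh j (swap_qp i) = 0.
  by move: JR_swap; case: ifP => _ // /eqP; rewrite oppr_eq0 => /eqP.
by rewrite oppr0 if_same.
Qed.

Lemma Ch_unobs_col (r : 'I_(m + m)) (j : 'I_N) : ~~ obs j -> Ch r j = 0.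
Proof.
move=> unobs_j; have N_gt0 : (0 < N)%N := leq_ltn_trans (leq0n j) (ltn_ord j).
have /obsvmx_mul_eq0/(_ (Ordinal N_gt0)) :=
  (obsvJR_kerE _).2 (supported_delta (P := unobs) unobs_j).
by rewrite expr0 mulmx1 -colE => /matrixP/(_ r 0); rewrite !mxE.
Qed.

Lemma sharpCh_unctrl_row (i : 'I_N) (x : 'I_(m + m)) : ~~ ctrl i -> sharp Ch i x = 0.
Proof.
move=> unctrl_i; have -> : sharp Ch i x = - (Jmx n *m Ch^T *m Jmx m) i x by rewrite !mxE.
rewrite mulmxJ mulJmx !mxE Ch_unobs_col ?observable_part_swap //.
by case: ifP; case: ifP; rewrite ?oppr0.
Qed.

Lemma Ah_zero (i j : 'I_N) : (obs i && ~~ obs j) || (~~ ctrl i && ctrl j) -> Ah i j = 0.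
Proof.
move=> hij; have -> : Ah i j = JR i j - 2^-1 * (sharp Ch *m Ch) i j by rewrite !mxE.
have -> : (sharp Ch *m Ch) i j = 0.
  case/orP: hij => /andP[unctrl_i unobs_j].
    by apply: mulmx_col0 => x; apply: Ch_unobs_col.
  by apply: mulmx_row0 => x; apply: sharpCh_unctrl_row.
rewrite mulr0 subr0; case/orP: hij => /andP[].
  exact: JR_obs_unobs.
exact: JR_unctrl_ctrl.
Qed.

Lemma Bh_unctrl_row (i : 'I_N) (j : 'I_(m + m)) : ~~ ctrl i -> Bh i j = 0.
Proof.
move=> unctrl_i; have -> : Bh i j = - (sharp Ch *m S) i j by rewrite !mxE.
by rewrite mulmx_row0 ?oppr0 // => x; apply: sharpCh_unctrl_row.
Qed.

Lemma unobservable_evec (i : 'I_N) : ~~ obs i -> in_unobservable Ah Ch (evec i).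
Proof.
move=> unobs_i; apply/obsvmx_mul_eq0 => t; rewrite -mulmxA.
apply: (mul_supported_eq0 (P := unobs)) => [r c|]; first exact: Ch_unobs_col.
apply: supported_exp_mul (supported_delta unobs_i) => r c.
rewrite /unobservable_coord negbK => obs_r unobs_c.
by apply: Ah_zero; rewrite obs_r unobs_c.
Qed.

Lemma observable_evec (i : 'I_N) : obs i -> in_observable Ah Ch (evec i).
Proof.
move=> obs_i w w_ker; rewrite /evec trmx_delta_mul.
have /obsvJR_kerE w_unobs : obsvmx JR Ch *m w = 0.
  have -> : JR = Ah + (2^-1 *: sharp Ch) *m Ch by rewrite -scalemxAl subrK.
  exact: obsvmx_output_injection.
by rewrite w_unobs ?raddf0 // /unobservable_coord negbK.
Qed.

Lemma uncontrollable_evec (i : 'I_N) : ~~ ctrl i -> in_uncontrollable Ah Bh (evec i).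
Proof.
move=> unctrl_i w; rewrite /evec trmx_delta_mul ctrbmx_mul.
suff -> : (\sum_(t < N) Ah ^+ t *m Bh *m submxcol w t) i 0 = 0 by rewrite raddf0.
apply: (supported_sum (P := @controllable_coord n k l)) unctrl_i => t.
rewrite -mulmxA; apply: supported_exp_mul.
  by move=> r c unctrl_r ctrl_c; apply: Ah_zero; apply/orP; right; apply/andP.
by apply: supported_mul_rows => r c; apply: Bh_unctrl_row.
Qed.

Lemma JR_feedback : JR = Ah + Bh *m (- 2^-1 *: (invmx S *m Ch)).
Proof.
have -> : Bh *m (- 2^-1 *: (invmx S *m Ch)) = 2^-1 *: (sharp Ch *m Ch).
  rewrite -scalemxAr scaleNr -scalerN; congr (_ *: _).
  by rewrite -mulNmx opprK mulmxA mulmxK.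
by rewrite subrK.
Qed.

Lemma Jmx_obsv_term_controllable (t : 'I_N) y :
  in_controllable Ah Bh (Jmx n *m ((JR ^+ t)^T *m Ch^T *m y)).
Proof.
have JR_ham := hamiltonian_Jmx_sym Rh_sym.
have -> : Jmx n *m ((JR ^+ t)^T *m Ch^T *m y)
          = (-1) ^+ t *: (JR ^+ t *m sharp Ch *m (Jmx m *m y)).
  rewrite trmx_sharp mulmxN mulNmx mulmxN !mulmxA -[Jmx n *m _ *m Jmx n]mulmxA.
  rewrite (trmx_exp_hamiltonian JR_ham) -scalemxAr mulmxA mulJmxJmx mulNmx mul1mx.
  by rewrite -!scalemxAl -scalerN !mulNmx opprK.
have -> : JR ^+ t *m sharp Ch = JR ^+ t *m Bh *m - invmx S.
  by rewrite -mulmxA mulNmx [_ *m - invmx S]mulmxN opprK mulmxK.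
by rewrite -mulmxA; apply/in_controllable_scale/(in_controllable_feedback _ JR_feedback).
Qed.

Lemma controllable_evec (i : 'I_N) : ctrl i -> in_controllable Ah Bh (evec i).
Proof.
move=> ctrl_i.
have [u uE] : exists u : 'rV[R]_M, u *m obsvmx JR Ch = delta_mx 0 (swap_qp i).
  have obs_swap : obs (swap_qp i) by rewrite observable_part_swap.
  have [u uE] := kalmanE_obs_row hkl hM hd1 hd2 hd3 obs_swap.
  by exists (u *m invmx G); rewrite obsvJR mulmxA mulmxKV.
have swap_iE : delta_mx (swap_qp i) 0 = \sum_(t < N) (JR ^+ t)^T *m Ch^T *m (submxrow u t)^T.
  rewrite -trmx_delta -uE /obsvmx -{1}[u]submxrowK mul_mxrow_mxcol linear_sum /=.
  by apply: eq_bigr => t _; rewrite !trmx_mul.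
have : in_controllable Ah Bh (Jmx n *m delta_mx (swap_qp i) 0).
  rewrite swap_iE mulmx_sumr; apply: in_controllable_sum => t _.
  exact: Jmx_obsv_term_controllable.
rewrite Jmx_delta_swap => /(in_controllable_scale (if (i < n)%N then 1 else -1)).
by rewrite scalerA; case: ifP; rewrite ?mulr1 ?mulrNN ?mulr1 scale1r.
Qed.

Theorem hamiltonian_kalman_form : kalman_canonical_form k l Ah Bh Ch.
Proof.
split.
- move=> i; case: (blk n k l i) (@controllable_evec i) (@uncontrollable_evec i)
    (@observable_evec i) (@unobservable_evec i) => /= hC hU hO hN;
  by split; first [exact: hC | exact: hU | exact: hO | exact: hN].
- by move=> i j /zeroA_obs_ctrl; apply: Ah_zero.
- by move=> i j /zeroB_unctrl; apply: Bh_unctrl_row.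
- by move=> i j /zeroC_unobs; apply: Ch_unobs_col.
Qed.

End HamiltonianKalmanForm.

Unset Implicit Arguments. Set Strict Implicit.

Theorem corollary1 (R : realType) (n m : nat) (hn : (0 < n)%N) (hm : (0 < m)%N)
  (Rm : 'M[R]_(n + n)) (C : 'M[R]_(m + m, n + n)) (Sigma : 'M[R]_(m + m))
  (hRsym : Rm^T = Rm) (hSigma : symplectic Sigma)
  (k l : nat) (hkl : (k + l <= n)%N)
  (Q : 'M[R]_(\sum_(i < n + n) (m + m)))
  (Z : 'M[R]_(n + n)) (xi : nat -> R)
  (hQ : orthogonal_mx Q) (hZ : symplectic Z)
  (hxi : forall i, (i < k)%N -> 0 < xi i)
  (hfact : obsvmx (Jmx n *m Rm) C
           = Q *m kalmanE n (\sum_(i < n + n) (m + m)) k l xi (fun _ => 1) xi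
               *m invmx Z)
  (X : 'M[R]_(\sum_(i < n + n) (m + m))) (Y : 'M[R]_(n + n))
  (d1 d2 d3 : nat -> R)
  (hX : X \in unitmx) (hY : symplectic Y)
  (hd1 : forall i, (i < k)%N -> d1 i != 0)
  (hd2 : forall i, (i < l)%N -> d2 i != 0)
  (hd3 : forall i, (i < k)%N -> d3 i != 0)
  (hXEY : X *m kalmanE n (\sum_(i < n + n) (m + m)) k l xi (fun _ => 1) xi *m Y
          = kalmanE n (\sum_(i < n + n) (m + m)) k l d1 d2 d3) :
  let A := Jmx n *m Rm - 2^-1 *: (sharp C *m C) in
  let B := - (sharp C *m Sigma) in
  let V := invmx Z in
  let V' := invmx Y *m V in
  let Ahat := V' *m A *m invmx V' in
  let Bhat := V' *m B in
  let Chat := C *m invmx V' in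
  [/\ symplectic V',
      (forall i : 'I_(n + n),
         match blk n k l i with
         | Qa | Pa => in_controllable Ahat Bhat (evec i)
                      /\ in_observable Ahat Chat (evec i)
         | Pb => in_controllable Ahat Bhat (evec i)
                 /\ in_unobservable Ahat Chat (evec i)
         | Qb => in_uncontrollable Ahat Bhat (evec i)
                 /\ in_observable Ahat Chat (evec i)
         | Qc | Pc => in_uncontrollable Ahat Bhat (evec i)
                      /\ in_unobservable Ahat Chat (evec i)
         end),
      (forall i j : 'I_(n + n),
         zeroA (blk n k l i) (blk n k l j) -> Ahat i j = 0),
      (forall (i : 'I_(n + n)) (j : 'I_(m + m)),
         zeroB (blk n k l i) -> Bhat i j = 0) &
      (forall (i : 'I_(m + m)) (j : 'I_(n + n)),
         zeroC (blk n k l j) -> Chat i j = 0)].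
Proof.
move=> A B V V' Ahat Bhat Chat.
pose W := Z *m Y.
have W_sympl : symplectic W := symplectic_mul hZ hY.
have V'E : V' = invmx W by rewrite /V' /V /W !symplectic_inv // sharp_mul.
have G_unit : Q *m invmx X \in unitmx.
  by rewrite unitmx_mul unitmx_inv hX andbT; case: (mulmx1_unit hQ).
have hM : (k + l + k <= \sum_(i < n + n) (m + m))%N.
  by rewrite sum_nat_const card_ord; nia.
have obsv_hat : obsvmx (Jmx n *m (W^T *m Rm *m W)) (C *m W)
    = Q *m invmx X *m kalmanE n (\sum_(i < n + n) (m + m)) k l d1 d2 d3.
  rewrite -symplectic_conj_Jmx_mul // obsvmx_conj ?symplectic_unit // hfact -hXEY.
  by rewrite /W !mulmxA mulmxKV ?symplectic_unit // mulmxKV.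
have AhatE : Ahat = Jmx n *m (W^T *m Rm *m W) - 2^-1 *: (sharp (C *m W) *m (C *m W)).
  by rewrite /Ahat /A V'E invmxK symplectic_conj_hamiltonian.
have BhatE : Bhat = - (sharp (C *m W) *m Sigma).
  by rewrite /Bhat /B V'E mulmxN mulmxA symplectic_invmx_sharp.
have ChatE : Chat = C *m W by rewrite /Chat V'E invmxK.
have := hamiltonian_kalman_form hkl hM hd1 hd2 hd3 (trmx_conj_sym W hRsym)
  (symplectic_unit hSigma) G_unit obsv_hat.
rewrite -AhatE -BhatE -ChatE => -[? ? ? ?]; split=> //.
by rewrite V'E; apply: symplectic_invmx.
Qed.
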